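(* Let $k\ge 3$ and let $c_1\ge c_2\ge\dots\ge c_k>0$ be constants with $\sum_{i=1}^k c_i=1$. For every $n$ such that all $c_i n$ are integers, let $G_n$ be the complete $k$-partite graph with parts $V_1,\dots,V_k$, $|V_i|=c_i n$. Then: (i) if $c_1\le \tfrac12$, $\mathrm{rc}(G_n)=n$; (ii) if $c_1>\tfrac12$, $\mathrm{rc}(G_n)=2c_1n-1$.
   Context: Robot crawler model: let $G=(V,E)$ be a finite connected simple graph with $|V|=n$. An initial weighting is a bijection $w_0:V\to\{-n,-n+1,\dots,-1\}$. At time $1$ the crawler visits $w_0^{-1}(-n)$. If the crawler visits vertex $v$ at time $t$, then $w_t(v)=t$ and $w_t(u)=w_{t-1}(u)$ for all $u\neq v$. If $\min_{y\in V}w_t(y)>0$, the process stops and $\mathcal{RC}(G,w_0):=t$. Otherwise, at time $t+1$ the crawler moves to the neighbour $u$ of $v$ minimising $w_t(u)$ (the weights are distinct, so this is well defined). A vertex is ''cleaned'' at the first time it is visited. With $\Omega_n$ the set of all $n!$ initial weightings, $\mathrm{rc}(G)=\min_{w_0\in\Omega_n}\mathcal{RC}(G,w_0)$, $\mathrm{RC}(G)=\max_{w_0\in\Omega_n}\mathcal{RC}(G,w_0)$, and $\overline{\mathrm{rc}}(G)=\mathbb{E}\,\mathcal{RC}(G,\overline{w_0})$ where $\overline{w_0}$ is uniformly distributed on $\Omega_n$. A complete $k$-partite graph with parts $V_1,\dots,V_k$ has an edge between $u$ and $v$ if and only if $u,v$ lie in different parts. *)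

From HB Require Import structures.
From mathcomp Require Import all_boot all_order all_algebra.
Set Implicit Arguments. Unset Strict Implicit. Unset Printing Implicit Defensive.
Import Order.TTheory GRing.Theory Num.Theory.

(* Initial weighting: a bijection V -> {-n,...,-1}, n = |V|.  Stated as an
   injective map into {-n,...,-1} (injective between sets of equal finite size
   = bijective). *)
Definition is_weighting (T : finType) (w0 : T -> int) : Prop :=
  injective w0 /\ forall v, ((- (#|T|%:Z) <= w0 v) && (w0 v <= -1))%R.

Definition upd (T : finType) (w : T -> int) (v : T) (x : int) : T -> int :=
  fun u => if u == v then x else w u.

(* the neighbour of v minimising the current weight (weights are distinct,
   so this is the unique such neighbour); if v had no neighbour we stay at v
   (never happens in a connected graph with >= 2 vertices). *)
Definition next_vertex (T : finType) (adj : rel T) (w : T -> int) (v : T) : T :=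
  odflt v [pick u | adj v u && [forall u', adj v u' ==> (w u <= w u')%R]].

Definition start_vertex (T : finType) (w0 : T -> int) : option T :=
  [pick v | [forall u, (w0 v <= w0 u)%R]].

(* crawl_state adj w0 t = (position, weighting) at time t.+1, i.e. after the
   crawler's (t+1)-th visit: (v_{t+1}, w_{t+1}). *)
Fixpoint crawl_state (T : finType) (adj : rel T) (w0 : T -> int) (t : nat)
  : option (T * (T -> int)) :=
  match t with
  | 0 => omap (fun v => (v, upd w0 v 1%:Z)) (start_vertex w0)
  | t'.+1 =>
      omap (fun p => let u := next_vertex adj p.2 p.1 in
                     (u, upd p.2 u (t'.+2)%:Z))
           (crawl_state adj w0 t')
  end.

Definition stopped_at (T : finType) (adj : rel T) (w0 : T -> int) (t : nat) : bool :=
  match t with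
  | 0 => false
  | t'.+1 =>
      match crawl_state adj w0 t' with
      | Some (_, w) => [forall y, (0 < w y)%R]
      | None => false
      end
  end.

Definition RC_is (T : finType) (adj : rel T) (w0 : T -> int) (m : nat) : Prop :=
  stopped_at adj w0 m /\ forall t, t < m -> ~~ stopped_at adj w0 t.

Definition rc_is (T : finType) (adj : rel T) (m : nat) : Prop :=
  (exists w0, is_weighting w0 /\ RC_is adj w0 m) /\
  (forall w0 m', is_weighting w0 -> RC_is adj w0 m' -> m <= m').

Definition kpart_vertex (k : nat) (s : 'I_k -> nat) : finType :=
  {i : 'I_k & 'I_(s i)}.

Definition kpart_adj (k : nat) (s : 'I_k -> nat) : rel (kpart_vertex s) :=
  fun x y => tag x != tag y.

(* Lower bounds: every step cleans at most one vertex, so RC >= n.  An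
   independent set A can only be entered from outside, so the crawler cleans a
   vertex of A at most every other step and RC >= 2|A| - 1.

   Upper bounds: any walk can be forced on the crawler by weighting the
   vertices in the order of their first visit, provided every revisit goes to
   the neighbour visited least recently, all neighbours having been visited.
   If no part holds more than half of the vertices, listing the vertices part
   by part and interleaving the two halves of the list yields a Hamiltonian
   path, so rc = n.  Otherwise the largest part V_1 is an independent set
   joined to all other vertices; alternating between V_1 and its complement,
   which is traversed cyclically, cleans everything in 2|V_1| - 1 steps. *)

From HB Require Import structures.
From mathcomp Require Import all_boot all_order all_algebra.
From mathcomp Require Import zify lra.
Set Implicit Arguments.
Unset Strict Implicit.
Unset Printing Implicit Defensive.
Import Order.TTheory GRing.Theory Num.Theory.

Lemma modn_window_neq m i j : i < j < i + m -> i %% m != j %% m.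
Proof.
move=> /andP[lt_ij lt_jim]; rewrite eq_sym eqn_mod_dvd ?(ltnW lt_ij) //.
by rewrite gtnNdvd ?subn_gt0 // ltn_subLR // ltnW.
Qed.

Lemma modn_window_witness m i j :
  j < m <= i -> exists2 i', i - m < i' <= i & i' %% m = j.
Proof.
move=> /andP[lt_jm le_mi].
have lt_r : (i - j) %% m < m by rewrite ltn_pmod // (leq_ltn_trans _ lt_jm).
have := divn_eq (i - j) m; move: ((i - j) %/ m) ((i - j) %% m) lt_r => Q R lt_Rm eq_ij.
exists (j + Q * m); first lia.
by rewrite addnC modnMDl modn_small.
Qed.

Lemma half_cases t : t = 2 * t./2 \/ t = (2 * t./2).+1.
Proof. lia. Qed.

Section Crawler.
Variables (T : finType) (adj : rel T).

Lemma start_vertex_eq (w0 : T -> int) v :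
  (forall u, u != v -> (w0 v < w0 u)%R) -> start_vertex w0 = Some v.
Proof.
move=> minv; rewrite /start_vertex; case: pickP => [u /forallP minu | nomin] /=.
  case: (eqVneq u v) => [-> // | neq_uv].
  by have := minu v; rewrite leNgt minv.
case/negP: (negbT (nomin v)); apply/forallP => u.
by case: (eqVneq u v) => [-> // | neq_uv]; apply/ltW/minv.
Qed.

Lemma next_vertex_eq (w : T -> int) v u :
  adj v u -> (forall u', adj v u' -> u' != u -> (w u < w u')%R) ->
  next_vertex adj w v = u.
Proof.
move=> adj_vu minu; rewrite /next_vertex.
case: pickP => [u' /andP[adj_vu' /forallP minu'] | nomin] /=.
  case: (eqVneq u' u) => [// | neq_u'u].
  by have := minu' u; rewrite adj_vu leNgt minu.
case/negP: (negbT (nomin u)); rewrite adj_vu; apply/forallP => u'.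
by apply/implyP => adj_vu'; case: (eqVneq u' u) => [-> // | ?]; apply/ltW/minu.
Qed.

Lemma next_vertex_adj (w : T -> int) v :
  next_vertex adj w v = v \/ adj v (next_vertex adj w v).
Proof. by rewrite /next_vertex; case: pickP => [u /andP[] | ] /=; auto. Qed.

Fixpoint walk_weights (w0 : T -> int) (q : nat -> T) (t : nat) : T -> int :=
  match t with
  | 0 => upd w0 (q 0) 1%:Z
  | t'.+1 => upd (walk_weights w0 q t') (q t'.+1) t'.+2%:Z
  end.

Section WalkWeights.
Variables (w0 : T -> int) (q : nat -> T).
Local Notation W := (walk_weights w0 q).

Lemma walk_weights_unvisited t y :
  (forall i, i <= t -> q i != y) -> W t y = w0 y.
Proof.
elim: t => [|t IH] fresh /=; rewrite /upd.
  by rewrite eq_sym (negbTE (fresh 0 (leqnn 0))).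
by rewrite eq_sym (negbTE (fresh t.+1 (leqnn _))) IH // => i /leqW /fresh.
Qed.

Lemma walk_weights_visited t i y : i <= t -> q i = y -> (i.+1%:Z <= W t y)%R.
Proof.
move=> le_it qiy; elim: t le_it => [|t IH] /=; rewrite /upd.
  by rewrite leqn0 => /eqP i0; rewrite -qiy i0 eqxx.
rewrite leq_eqVlt => /orP[/eqP eq_it | lt_it]; first by rewrite -qiy eq_it eqxx.
by have := IH lt_it; case: ifP => _; lia.
Qed.

Lemma walk_weights_le_last t j y :
  (w0 y <= 0)%R -> (forall i, j <= i <= t -> q i != y) -> (W t y <= j%:Z)%R.
Proof.
move=> w0y_le0; elim: t => [|t IH] unvisited /=; rewrite /upd.
  case: eqP => [yq | _]; last lia.
  by case: j unvisited => [/(_ 0 isT) | ?]; [rewrite yq eqxx | lia].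
case: eqP => [yq | _].
  case: (leqP j t.+1) => [le_jt | ?]; last lia.
  by have := unvisited t.+1; rewrite le_jt leqnn yq eqxx => /(_ isT).
by apply: IH => i /andP[le_ji le_it]; apply: unvisited; rewrite le_ji ltnW.
Qed.

Lemma crawl_state_walk N :
  start_vertex w0 = Some (q 0) ->
  (forall t, t < N -> next_vertex adj (W t) (q t) = q t.+1) ->
  forall t, t <= N -> crawl_state adj w0 t = Some (q t, W t).
Proof.
move=> start step; elim=> [|t IH] le_tN /=; first by rewrite start.
by rewrite IH ?(ltnW le_tN) //= step.
Qed.

End WalkWeights.

Lemma weighting_lt0 (w0 : T -> int) : is_weighting w0 -> forall v, (w0 v < 0)%R.
Proof. by move=> [_ range] v; have /andP[_] := range v; lia. Qed.

Section Cleaning.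
Variable w0 : T -> int.
Hypothesis w0_lt0 : forall v, (w0 v < 0)%R.

Lemma card_cleaned_le t v w :
  crawl_state adj w0 t = Some (v, w) -> #|[set y | (0 < w y)%R]| <= t.+1.
Proof.
elim: t v w => [|t IH] v w /=.
  case: (start_vertex w0) => [v0|] //= [_ <-].
  rewrite -(cards1 v0); apply/subset_leq_card/subsetP => y.
  by rewrite !inE /upd; case: eqP => // _; rewrite ltNge ltW.
case E: (crawl_state adj w0 t) => [[v' w']|] //= [_ <-].
set u := next_vertex _ _ _.
have sub_new : [set y | (0 < upd w' u t.+2%:Z y)%R] \subset u |: [set y | (0 < w' y)%R].
  by apply/subsetP => y; rewrite !inE /upd; case: eqP.
have := subset_leq_card sub_new; have := IH _ _ E; rewrite cardsU1; lia.
Qed.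

Lemma card_cleaned_independent_le (A : {set T}) t v w :
  {in A &, forall x y, ~~ adj x y} -> crawl_state adj w0 t = Some (v, w) ->
  (0 < w v)%R /\ 2 * #|[set y in A | (0 < w y)%R]| <= t.+1 + (v \in A).
Proof.
move=> indepA; elim: t v w => [|t IH] v w /=.
  case: (start_vertex w0) => [v0|] //= [<- <-]; split; first by rewrite /upd eqxx.
  case: (boolP (v0 \in A)) => v0A.
    have : [set y in A | (0 < upd w0 v0 1%:Z y)%R] \subset [set v0].
      apply/subsetP => y; rewrite !inE /upd.
      by case: eqP => // _ /andP[_]; rewrite ltNge ltW.
    by move/subset_leq_card; rewrite cards1 /=; lia.
  rewrite (_ : [set y in A | _] = set0) ?cards0 //; apply/setP => y.
  by rewrite !inE /upd; case: eqP => [-> | _]; rewrite ?(negbTE v0A) // ltNge ltW ?andbF.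
case E: (crawl_state adj w0 t) => [[v' w']|] //= [<- <-].
set u := next_vertex _ _ _.
have [w'v'_gt0 cardA] := IH _ _ E.
split; first by rewrite /upd eqxx.
have stay : u \in A -> v' \in A -> u = v'.
  move=> uA v'A; case: (next_vertex_adj w' v') => // adj_v'u.
  by have := indepA _ _ v'A uA; rewrite adj_v'u.
move: cardA; case: (boolP (u \in A)) => uA.
  have : [set y in A | (0 < upd w' u t.+2%:Z y)%R] \subset
         u |: [set y in A | (0 < w' y)%R].
    by apply/subsetP => y; rewrite !inE /upd; case: eqP => // _ ->; rewrite orbT.
  move/subset_leq_card; rewrite cardsU1 inE uA.
  case: (boolP (v' \in A)) => v'A /=; last lia.
  by rewrite (stay uA v'A) w'v'_gt0 /=; lia.
have : [set y in A | (0 < upd w' u t.+2%:Z y)%R] \subset [set y in A | (0 < w' y)%R].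
  by apply/subsetP => y; rewrite !inE /upd; case: eqP => // ->; rewrite (negbTE uA).
by move/subset_leq_card; case: (v' \in A) => /=; lia.
Qed.

End Cleaning.

Lemma stopped_at_card_le (w0 : T -> int) t :
  is_weighting w0 -> stopped_at adj w0 t -> #|T| <= t.
Proof.
move=> /weighting_lt0 w0_lt0; case: t => [|t] //=.
case E: crawl_state => [[v w]|] // /forallP all_pos.
have := card_cleaned_le w0_lt0 E.
by rewrite (_ : [set y | (0 < w y)%R] = setT) ?cardsT //; apply/setP => y; rewrite !inE all_pos.
Qed.

Lemma stopped_at_independent (w0 : T -> int) (A : {set T}) t :
  is_weighting w0 -> {in A &, forall x y, ~~ adj x y} ->
  stopped_at adj w0 t -> 2 * #|A| <= t.+1.
Proof.
move=> /weighting_lt0 w0_lt0 indepA; case: t => [|t] //=.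
case E: crawl_state => [[v w]|] // /forallP all_pos.
have [_] := card_cleaned_independent_le w0_lt0 indepA E.
rewrite (_ : [set y in A | (0 < w y)%R] = A); first by case: (v \in A); lia.
by apply/setP => y; rewrite !inE all_pos andbT.
Qed.

Lemma rc_is_intro m :
  (exists2 w0, is_weighting w0 & stopped_at adj w0 m) ->
  (forall w0 t, is_weighting w0 -> stopped_at adj w0 t -> m <= t) ->
  rc_is adj m.
Proof.
move=> [w0 w0_wt stop_m] lower; split=> [|w0' m' w0'_wt [stop' _]].
  exists w0; split=> //; split=> // t lt_tm; apply/negP => /(lower _ _ w0_wt).
  by rewrite leqNgt lt_tm.
exact: lower stop'.
Qed.

(* The walk moves either to a new vertex, or to the neighbour whose last visit
   precedes the visits of all other neighbours. *)
Definition greedy_step (q : nat -> T) (t : nat) : Prop :=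
  adj (q t) (q t.+1) /\
  ((forall i, i <= t -> q i != q t.+1) \/
   forall x, adj (q t) x -> x != q t.+1 ->
     exists2 j, j <= t & q j = x /\ forall i, j <= i <= t -> q i != q t.+1).

Section FirstVisit.
Variables (q : nat -> T) (N : nat).
Hypothesis q_onto : forall v, exists2 t, t <= N & q t = v.

Let first_visit v := index v (mkseq q N.+1).

Let first_visit_le v : first_visit v <= N.
Proof.
have [t le_tN <-] := q_onto v.
by rewrite -ltnS -[X in (_ < X)](size_mkseq q) index_mem; apply: map_f; rewrite mem_iota.
Qed.

Let first_visitK v : q (first_visit v) = v.
Proof.
have fv_lt : first_visit v < N.+1 := first_visit_le v.
by rewrite -(nth_mkseq v q fv_lt) nth_index // -index_mem size_mkseq.
Qed.

Let first_visit_min t : t <= N -> first_visit (q t) <= t.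
Proof.
move=> le_tN; rewrite /first_visit -{1}(nth_mkseq (q 0) q (_ : t < N.+1)) //.
by rewrite index_nth // size_mkseq.
Qed.

Let rank v := #|[set u | first_visit u < first_visit v]|.
Let w0 v : int := (rank v)%:Z - #|T|%:Z.

Let w0_lt u v : first_visit u < first_visit v -> (w0 u < w0 v)%R.
Proof.
move=> lt_uv; suff : rank u < rank v by rewrite /w0; lia.
apply/proper_card/properP; split.
  by apply/subsetP => y; rewrite !inE => /ltn_trans; apply.
by exists u; rewrite !inE ?ltnn.
Qed.

Let w0_is_weighting : is_weighting w0.
Proof.
split.
  move=> u v eq_w; case: (ltngtP (first_visit u) (first_visit v)).
  - by move/w0_lt; rewrite eq_w ltxx.
  - by move/w0_lt; rewrite eq_w ltxx.
  by move=> eq_fv; rewrite -(first_visitK u) eq_fv first_visitK.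
move=> v; have : rank v < #|T|.
  rewrite -cardsT; apply/proper_card/properP; split; first exact: subsetT.
  by exists v; rewrite !inE ?ltnn.
by rewrite /w0; move: (rank v) => r lt_r; clear -lt_r; lia.
Qed.

Let w0_start : start_vertex w0 = Some (q 0).
Proof.
apply: start_vertex_eq => u neq_u; apply: w0_lt.
have := first_visit_min (leq0n N); rewrite leqn0 => /eqP ->; rewrite lt0n.
by apply: contra neq_u => /eqP fv_u; rewrite -(first_visitK u) fv_u.
Qed.

Let w0_step t :
  t < N -> greedy_step q t ->
  next_vertex adj (walk_weights w0 q t) (q t) = q t.+1.
Proof.
move=> lt_tN [adj_step [fresh | recent]];
  apply: next_vertex_eq => // x adj_x neq_x.
  have fv_next : first_visit (q t.+1) = t.+1.
    apply/eqP; rewrite eqn_leq first_visit_min // ltnNge; apply/negP => le_fv.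
    by have := fresh _ le_fv; rewrite first_visitK eqxx.
  rewrite walk_weights_unvisited //.
  have [le_fv | lt_fv] := leqP (first_visit x) t.
    apply: lt_le_trans (walk_weights_visited w0 le_fv (first_visitK x)).
    by apply: (lt_trans (weighting_lt0 w0_is_weighting _)).
  rewrite walk_weights_unvisited; last first.
    move=> i le_it; apply: contraTneq lt_fv => qix.
    rewrite -leqNgt -qix.
    exact: leq_trans (first_visit_min (leq_trans le_it (ltnW lt_tN))) le_it.
  apply: w0_lt; rewrite fv_next ltn_neqAle lt_fv eq_sym andbT.
  by apply: contra neq_x => /eqP fv_x; rewrite -(first_visitK x) fv_x.
have [j le_jt [qjx unvisited]] := recent x adj_x neq_x.
have w0_le0 := ltW (weighting_lt0 w0_is_weighting (q t.+1)).
apply: le_lt_trans (walk_weights_le_last w0_le0 unvisited) _.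
by apply: lt_le_trans (walk_weights_visited w0 le_jt qjx); rewrite ltz_nat.
Qed.

Lemma stopped_at_greedy_walk :
  (forall t, t < N -> greedy_step q t) ->
  exists2 w, is_weighting w & stopped_at adj w N.+1.
Proof.
move=> steps; exists w0; first exact: w0_is_weighting.
have follow t (lt_tN : t < N) := w0_step lt_tN (steps t lt_tN).
rewrite /= (crawl_state_walk w0_start follow (leqnn N)); apply/forallP => y.
by apply: lt_le_trans _ (walk_weights_visited w0 (first_visit_le y) (first_visitK y)).
Qed.

End FirstVisit.

Lemma rc_is_hamiltonian (q : nat -> T) :
  0 < #|T| ->
  (forall t, t.+1 < #|T| -> adj (q t) (q t.+1)) ->
  (forall i j, i < j < #|T| -> q i != q j) ->
  (forall v, exists2 t, t < #|T| & q t = v) ->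
  rc_is adj #|T|.
Proof.
move=> T_gt0 path_q uniq_q onto_q.
apply: rc_is_intro => [|w0 t w0_wt]; last exact: stopped_at_card_le.
rewrite -(prednK T_gt0); apply: (stopped_at_greedy_walk (q := q)) => [v | t lt_t].
  by have [t lt_t qv] := onto_q v; exists t; rewrite // -ltnS prednK.
split; first by apply: path_q; lia.
by left=> i le_it; apply: uniq_q; lia.
Qed.

Section DominantIndependentSet.
Variables (A : {set T}) (x0 : T).
Hypothesis indepA : {in A &, forall x y, ~~ adj x y}.
Hypothesis joinA : {in A & ~: A, forall x y, adj x y && adj y x}.
Hypothesis card_compl : 0 < #|~: A| < #|A|.

Let m := #|~: A|.
Let a i := nth x0 (enum A) i.
Let b j := nth x0 (enum (~: A)) j.
Let q t := if odd t then b (t./2 %% m) else a t./2.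

Let m_gt0 : 0 < m. Proof. by case/andP: card_compl. Qed.

Let a_in i : i < #|A| -> a i \in A.
Proof. by move=> lt_i; rewrite -mem_enum mem_nth // -cardE. Qed.

Let b_notin j : j < m -> b j \in ~: A.
Proof. by move=> lt_j; rewrite -mem_enum mem_nth // -cardE. Qed.

Let a_neq_b i j : i < #|A| -> j < m -> a i != b j.
Proof. by move=> lt_i lt_j; apply: contraTneq (b_notin lt_j) => <-; rewrite inE a_in. Qed.

Let a_inj i j : i < #|A| -> j < #|A| -> (a i == a j) = (i == j).
Proof. by move=> lt_i lt_j; rewrite nth_uniq ?enum_uniq // -cardE. Qed.

Let b_mod_inj i j : (b (i %% m) == b (j %% m)) = (i %% m == j %% m).
Proof. by rewrite nth_uniq ?enum_uniq // -cardE ltn_pmod. Qed.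

Let q_even i : q (2 * i) = a i.
Proof. by rewrite /q oddM /= mul2n doubleK. Qed.

Let q_odd i : q (2 * i).+1 = b (i %% m).
Proof. by rewrite /q /= oddM /= mul2n uphalf_double. Qed.

Let index_compl_lt x : x \in ~: A -> index x (enum (~: A)) < m.
Proof. by move=> xB; rewrite /m cardE index_mem mem_enum. Qed.

Let q_onto v : exists2 t, t <= 2 * #|A| - 2 & q t = v.
Proof.
case: (boolP (v \in A)) => vA.
  have lt_i : index v (enum A) < #|A| by rewrite cardE index_mem mem_enum.
  by exists (2 * index v (enum A)); [lia | rewrite q_even /a nth_index ?mem_enum].
have vB : v \in ~: A by rewrite inE.
have lt_j := index_compl_lt vB.
exists (2 * index v (enum (~: A))).+1; first by move: card_compl; rewrite -/m; lia.
by rewrite q_odd modn_small // /b nth_index ?mem_enum.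
Qed.

Let q_step t : t < 2 * #|A| - 2 -> greedy_step q t.
Proof.
move: t./2 (half_cases t) => i [-> | ->] lt_t.
  have lt_i : i < #|A| by lia.
  rewrite /greedy_step q_even q_odd; split.
    by case/andP: (joinA (a_in lt_i) (b_notin (ltn_pmod i m_gt0))).
  have [lt_im | le_mi] := ltnP i m.
    left=> j; move: (half_cases j) => [-> | ->] le_j; rewrite ?q_even ?q_odd.
      by apply: a_neq_b; lia.
    by rewrite b_mod_inj !modn_small //; lia.
  right=> x adj_x neq_x.
  have xB : x \in ~: A.
    by rewrite inE; apply: contraTN adj_x => xA; apply: indepA => //; apply: a_in.
  have := @modn_window_witness m i (index x (enum (~: A))).
  rewrite index_compl_lt // le_mi => /(_ isT) [i' win_i' mod_i'].
  have bx : b (i' %% m) = x by rewrite mod_i' /b nth_index ?mem_enum.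
  have lt_i' : i' < i.
    rewrite ltn_neqAle; case/andP: win_i' => _ ->; rewrite andbT.
    by apply: contra neq_x => /eqP eq_i'; rewrite -eq_i' bx.
  exists (2 * i').+1; first lia.
  split; first by rewrite q_odd.
  move=> j /andP[le_j le_jt]; move: (half_cases j) le_j le_jt => [-> | ->] le_j le_jt.
    by rewrite q_even; apply: a_neq_b; lia.
  rewrite q_odd b_mod_inj; apply: modn_window_neq; lia.
have lt_i : i.+1 < #|A| by lia.
rewrite /greedy_step (_ : (2 * i).+2 = 2 * i.+1) ?q_even ?q_odd; last lia.
split; first by case/andP: (joinA (a_in lt_i) (b_notin (ltn_pmod i m_gt0))).
left=> j; move: (half_cases j) => [-> | ->] le_j; rewrite ?q_even ?q_odd.
  by rewrite a_inj; lia.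
by rewrite eq_sym; apply: a_neq_b; [lia | apply: ltn_pmod].
Qed.

Lemma stopped_at_dominant_walk :
  exists2 w, is_weighting w & stopped_at adj w (2 * #|A|).-1.
Proof.
have -> : (2 * #|A|).-1 = (2 * #|A| - 2).+1 by rewrite -subn1; move: card_compl; lia.
exact: stopped_at_greedy_walk q_onto q_step.
Qed.

End DominantIndependentSet.

Lemma rc_is_dominant_independent (A : {set T}) :
  {in A &, forall x y, ~~ adj x y} ->
  {in A & ~: A, forall x y, adj x y && adj y x} ->
  0 < #|~: A| < #|A| ->
  rc_is adj (2 * #|A|).-1.
Proof.
move=> indepA joinA card_compl.
have /card_gt0P [x0 _] : 0 < #|A| by move: card_compl; lia.
apply: rc_is_intro => [|w0 t w0_wt stop_t].
  exact: stopped_at_dominant_walk x0 indepA joinA card_compl.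
by have := stopped_at_independent w0_wt indepA stop_t; lia.
Qed.

End Crawler.

Lemma count_uniq_full (T : finType) (P : pred T) (L : seq T) :
  uniq L -> (forall x, x \in L) -> count P L = #|P|.
Proof.
move=> uniqL fullL; rewrite -size_filter -(card_uniqP (filter_uniq P uniqL)).
by apply: eq_card => x; rewrite mem_filter fullL andbT.
Qed.

(* Equal keys at positions [i <= j] of a key-sorted list force the whole
   slice [i..j] into a single key class. *)
Lemma sorted_key_gap (T : eqType) (key : T -> nat) (x0 : T) (L : seq T) i j :
  sorted (relpre key leq) L -> i <= j < size L ->
  key (nth x0 L i) = key (nth x0 L j) ->
  j - i < count (fun v => key v == key (nth x0 L i)) L.
Proof.
move=> sortL /andP[le_ij lt_j] eq_key.
have mono := sorted_leq_nth (fun y x z => @leq_trans (key y) (key x) (key z))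
                           (fun x => leqnn (key x)) x0 sortL.
set slice := drop i (take j.+1 L).
have size_slice : size slice = j.+1 - i by rewrite size_drop size_takel.
have : all (fun v => key v == key (nth x0 L i)) slice.
  apply/(all_nthP x0) => z; rewrite size_slice => lt_z.
  rewrite nth_drop nth_take; last lia.
  by rewrite eqn_leq {1}eq_key !mono ?inE //; lia.
rewrite all_count size_slice => /eqP cnt_slice.
apply: leq_trans (leq_count_subseq _ (subseq_trans (drop_subseq _ i) (take_subseq _ j.+1))).
by rewrite -/slice cnt_slice; lia.
Qed.

Lemma rc_is_complete_multipartite (T : finType) (adj : rel T) (key : T -> nat) :
  (forall x y, adj x y = (key x != key y)) -> 0 < #|T| ->
  (forall v, 2 * #|[pred u | key u == key v]| <= #|T|) ->
  rc_is adj #|T|.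
Proof.
move=> adjE T_gt0 small_parts; have /card_gt0P [x0 _] := T_gt0.
pose L := sort (relpre key leq) (enum T).
have uniqL : uniq L by rewrite sort_uniq enum_uniq.
have memL v : v \in L by rewrite mem_sort mem_enum.
have sizeL : size L = #|T| by rewrite size_sort cardT.
have sortedL : sorted (relpre key leq) L by apply: sort_sorted => x y; apply: leq_total.
pose h := #|T|./2.
pose pos t := if odd t then t./2 else h + t./2.
have pos_even i : pos (2 * i) = h + i by rewrite /pos oddM /= mul2n doubleK.
have pos_odd i : pos (2 * i).+1 = i by rewrite /pos /= oddM /= mul2n uphalf_double.
have pos_lt t : t < #|T| -> pos t < #|T|.
  by move: t./2 (half_cases t) => i [-> | ->]; rewrite ?pos_even ?pos_odd; lia.
have apart x y : x <= y < #|T| -> h <= y - x -> key (nth x0 L x) != key (nth x0 L y).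
  move=> xy far; apply/eqP => same; have := sorted_key_gap sortedL _ same.
  rewrite sizeL (count_uniq_full _ uniqL memL) => /(_ xy).
  have := small_parts (nth x0 L x).
  by rewrite (@eq_card _ _ [pred u | key u == key (nth x0 L x)]) //; lia.
apply: (rc_is_hamiltonian (q := fun t => nth x0 L (pos t))) => // [t | i j | v].
- move: t./2 (half_cases t) => i [-> | ->] lt_t; rewrite adjE.
    by rewrite pos_even pos_odd eq_sym apart //; lia.
  by rewrite (_ : (2 * i).+2 = 2 * i.+1) ?pos_even ?pos_odd ?apart //; lia.
- move=> /andP[lt_ij lt_j]; rewrite nth_uniq ?sizeL ?pos_lt //; try lia.
  move: i./2 (half_cases i) j./2 (half_cases j) lt_ij lt_j.
  by move=> i' [-> | ->] j' [-> | ->]; rewrite ?pos_even ?pos_odd; lia.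
have lt_p : index v L < #|T| by rewrite -sizeL index_mem.
case: (ltnP (index v L) h) => [lt_h | le_h].
  by exists (2 * index v L).+1; rewrite ?pos_odd ?nth_index //; lia.
by exists (2 * (index v L - h)); rewrite ?pos_even ?subnKC ?nth_index //; lia.
Qed.

Section CompleteKPartite.
Variables (k : nat) (s : 'I_k -> nat).

Lemma card_kpart_part i : #|[set v : kpart_vertex s | tag v == i]| = s i.
Proof.
rewrite -[s i in RHS]card_ord -(card_imset _ (@eq_from_Tagged _ (fun i => 'I_(s i)) i)).
apply: eq_card => -[i' j]; rewrite inE /=; apply/eqP/imsetP => [<- | [j' _ /(congr1 tag) //]].
by exists j.
Qed.

Lemma card_kpart_vertex : #|kpart_vertex s| = \sum_(i < k) s i.
Proof.
by rewrite card_tagged sumnE big_map big_enum; apply: eq_bigr => i _; rewrite card_ord.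
Qed.

Lemma rc_kpart_balanced :
  0 < \sum_(i < k) s i -> (forall i, 2 * s i <= \sum_(j < k) s j) ->
  rc_is (@kpart_adj k s) (\sum_(i < k) s i).
Proof.
move=> n_gt0 small_parts; rewrite -card_kpart_vertex.
apply: (rc_is_complete_multipartite (key := fun v => val (tag v))) => [x y | | v].
- by rewrite /kpart_adj val_eqE.
- by rewrite card_kpart_vertex.
rewrite card_kpart_vertex (@eq_card _ _ [set u | tag u == tag v]) => [|u].
  by rewrite card_kpart_part.
by rewrite !inE val_eqE.
Qed.

Lemma rc_kpart_dominant i0 :
  0 < \sum_(i < k) s i - s i0 < s i0 -> rc_is (@kpart_adj k s) (2 * s i0).-1.
Proof.
move=> sizes; rewrite -(card_kpart_part i0); apply: rc_is_dominant_independent.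
- by move=> x y; rewrite !inE /kpart_adj => /eqP -> /eqP ->; rewrite eqxx.
- by move=> x y; rewrite !inE /kpart_adj => /eqP -> neq; rewrite neq eq_sym neq.
have := cardsC [set v : kpart_vertex s | tag v == i0].
by rewrite card_kpart_part card_kpart_vertex; lia.
Qed.

End CompleteKPartite.

Local Open Scope ring_scope.

Theorem theorem1 (R : realFieldType) (k : nat) (c : 'I_k -> R)
  (i0 : 'I_k) (n : nat) (s : 'I_k -> nat) :
  (3 <= k)%N ->
  nat_of_ord i0 = 0%N ->
  (forall i, 0 < c i) ->
  (forall i j : 'I_k, (i <= j)%N -> c j <= c i) ->
  \sum_(i < k) c i = 1 ->
  (0 < n)%N ->
  (forall i, (s i)%:R = c i * n%:R) ->
  (c i0 <= 1 / 2 -> rc_is (@kpart_adj k s) n) /\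
  (1 / 2 < c i0 -> rc_is (@kpart_adj k s) (2 * s i0).-1).
Proof.
move=> k_ge3 i0_first c_gt0 c_mono c_sum n_gt0 sE.
have n_gt0R : 0 < n%:R :> R by rewrite ltr0n.
have sum_s : (\sum_(i < k) s i)%N = n.
  apply/eqP; rewrite -(eqr_nat R) natr_sum.
  under eq_bigr do rewrite sE.
  by rewrite -mulr_suml c_sum mul1r.
have s_le i : (s i <= s i0)%N.
  by rewrite -(ler_nat R) !sE ler_wpM2r ?ler0n // c_mono // i0_first.
split=> [c_small | c_big].
  rewrite -sum_s; apply: rc_kpart_balanced => [|i]; rewrite sum_s //.
  have : (2 * s i0 <= n)%N by rewrite -(ler_nat R) natrM sE; nra.
  by have := s_le i; lia.
apply: rc_kpart_dominant; rewrite sum_s.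
pose i1 : 'I_k := Ordinal (leq_trans (isT : 2 <= 3)%N k_ge3).
have i1_neq : i1 != i0 by rewrite -val_eqE /= i0_first.
have : (s i0 + s i1 <= n)%N.
  by rewrite -sum_s (bigD1 i0) //= (bigD1 i1 i1_neq) /= addnA leq_addr.
have : (0 < s i1)%N by rewrite -(ltr0n R) sE mulr_gt0.
have : (n < 2 * s i0)%N by rewrite -(ltr_nat R) natrM sE; nra.
lia.
Qed.
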